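(* Let $\mathbf{x}\in\Delta^0$. Then: (1) for every $\tilde{\mathbf{x}}\in\mathcal{P}(\mathbf{x})\cap\Delta^0$ we have $f(\tilde{\mathbf{x}})=f(\mathbf{x})$; (2) for every nonzero $\mathbf{d}\in\mathbb{R}^n$ such that $\mathbf{x}+t\mathbf{d}\in\Delta^0$ for all sufficiently small $t>0$, we have $\mathbf{d}^{\mathsf T}\nabla^2 f(\mathbf{x})\mathbf{d}<0$.
   Context: Let $G=(\mathcal{V},\mathcal{E})$ be a simple undirected graph on vertex set $\mathcal{V}=\{1,\dots,n\}$ with adjacency matrix $\mathbf{A}=(a_{ij})$ ($a_{ij}=1$ if $(i,j)\in\mathcal{E}$, else $0$; $a_{ii}=0$). A clique is a subset $C\subseteq\mathcal{V}$ with $(i,j)\in\mathcal{E}$ for all distinct $i,j\in C$. Let $\Delta=\{\mathbf{x}\in\mathbb{R}^n:\mathbf{0}\le\mathbf{x}\le\mathbf{1},\ \mathbf{1}^{\mathsf T}\mathbf{x}=1\}$. For $\mathbf{x}\in\mathbb{R}^n$, $\mathrm{supp}(\mathbf{x})=\{i:x_i\neq0\}$. Let $\Delta^0=\{\mathbf{x}\in\Delta:\mathrm{supp}(\mathbf{x})\text{ is a clique}\}$. For $\mathbf{x}\in\Delta$, $\mathcal{P}(\mathbf{x})=\{\tilde{\mathbf{x}}\in\Delta:\exists$ a permutation $\sigma$ of $\{1,\dots,n\}$ with $\tilde x_i=x_{\sigma(i)}$ for all $i\}$. Let $\Phi:X\to\mathbb{R}$ be twice continuously differentiable on an open set $X\supset\Delta$,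 satisfying for every $\mathbf{x}\in\Delta$: (C1) $\nabla^2\Phi(\mathbf{x})$ is positive semidefinite; (C2) $\|\nabla^2\Phi(\mathbf{x})\|_2<2$ (spectral norm); (C3) $\Phi$ is constant on $\mathcal{P}(\mathbf{x})$. Define $f(\mathbf{x})=\mathbf{x}^{\mathsf T}\mathbf{A}\mathbf{x}+\Phi(\mathbf{x})$. *)

(* Vectors of R^n are row vectors 'rV[R]_n,
   vertices {1..n} are 'I_n (0-based). *)
From HB Require Import structures.
From mathcomp Require Import all_boot all_order all_algebra all_fingroup.
From mathcomp Require Import all_classical all_reals all_analysis.
Set Implicit Arguments. Unset Strict Implicit. Unset Printing Implicit Defensive.
Import Order.TTheory GRing.Theory Num.Theory.
Import numFieldNormedType.Exports.
Local Open Scope classical_set_scope.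
Local Open Scope ring_scope.

Section Defs.
Variables (R : realType) (n : nat).

Definition simple_graph (e : rel 'I_n) : Prop :=
  (forall i j, e i j = e j i) /\ (forall i, ~~ e i i).

Definition adjmx (e : rel 'I_n) : 'M[R]_n := \matrix_(i, j) (e i j)%:R.

Definition is_clique (e : rel 'I_n) (C : {set 'I_n}) : Prop :=
  forall i j, i \in C -> j \in C -> i != j -> e i j.

Definition supp (x : 'rV[R]_n) : {set 'I_n} := [set i | x 0 i != 0].

Definition simplex : set 'rV[R]_n :=
  [set x | (forall i, 0 <= x 0 i <= 1) /\ \sum_i x 0 i = 1].

Definition simplex0 (e : rel 'I_n) : set 'rV[R]_n :=
  [set x | simplex x /\ is_clique e (supp x)].

Definition perm_orbit (x : 'rV[R]_n) : set 'rV[R]_n :=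
  [set xt | simplex xt /\ exists s : 'S_n, forall i, xt 0 i = x 0 (s i)].

Definition unitv (i : 'I_n) : 'rV[R]_n := \row_j (i == j)%:R.

Definition partial (g : 'rV[R]_n -> R) (i : 'I_n) : 'rV[R]_n -> R :=
  fun y => derive g y (unitv i).

Definition hessian (g : 'rV[R]_n -> R) (x : 'rV[R]_n) : 'M[R]_n :=
  \matrix_(i, j) partial (partial g i) j x.

Definition C2_on (X : set 'rV[R]_n) (g : 'rV[R]_n -> R) : Prop :=
  open X /\
  (forall x, X x -> {for x, continuous g}) /\
  (forall i x, X x -> derivable g x (unitv i)) /\
  (forall i x, X x -> {for x, continuous (partial g i)}) /\
  (forall i j x, X x -> derivable (partial g i) x (unitv j)) /\
  (forall i j x, X x -> {for x, continuous (partial (partial g i) j)}).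

Definition qform (M : 'M[R]_n) (v : 'rV[R]_n) : R := (v *m M *m v^T) 0 0.

Definition psd (M : 'M[R]_n) : Prop := forall v, 0 <= qform M v.

Definition euclid_norm (v : 'rV[R]_n) : R := Num.sqrt (\sum_i v 0 i ^+ 2).

Definition spectral_norm (M : 'M[R]_n) : R :=
  sup [set euclid_norm (v *m M^T) | v in [set v | euclid_norm v = 1]].

End Defs.

From HB Require Import structures.
From mathcomp Require Import all_boot all_order all_algebra all_fingroup.
From mathcomp Require Import all_classical all_reals all_analysis.
From mathcomp Require Import ring lra.
Import Order.TTheory GRing.Theory Num.Theory.
Import numFieldNormedType.Exports.
Local Open Scope classical_set_scope.
Local Open Scope ring_scope.
Set Implicit Arguments. Unset Strict Implicit. Unset Printing Implicit Defensive.

(* If supp y is a clique then y^T A y = (sum y)^2 - |y|^2, which is 1 - |y|^2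
   on the simplex; so on Delta^0 both terms of f are permutation invariant.
   A feasible direction d at x keeps the coordinate sum, so sum d = 0, and keeps
   x + t d >= 0 on an interval, so supp d lies in the clique supp (x + t d);
   hence d^T A d = -|d|^2.  As Hess f = A + A^T + Hess Phi, we get
   d^T (Hess f) d <= -2|d|^2 + ||Hess Phi|| |d|^2 < 0 by (C2). *)

Section Bilform.
Variables (R : comPzRingType) (n : nat).
Implicit Types (M N : 'M[R]_n) (a b c : 'rV[R]_n).

Definition bilform M a b : R := (a *m M *m b^T) 0 0.

Lemma bilformE M a b : bilform M a b = \sum_i \sum_j a 0 i * M i j * b 0 j.
Proof.
rewrite /bilform mxE exchange_big; apply: eq_bigr => j _.
by rewrite !mxE big_distrl.
Qed.

Lemma bilform_rowE M a b : bilform M a b = \sum_j (a *m M) 0 j * b 0 j.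
Proof. by rewrite /bilform mxE; apply: eq_bigr => j _; rewrite [b^T _ _]mxE. Qed.

Lemma bilformPl M (h : R) a b c :
  bilform M (h *: a + b) c = h * bilform M a c + bilform M b c.
Proof. by rewrite /bilform !mulmxDl -!scalemxAl mxE [X in X + _]mxE. Qed.

Lemma bilformPr M (h : R) a b c :
  bilform M c (h *: a + b) = h * bilform M c a + bilform M c b.
Proof. by rewrite /bilform linearP /= mulmxDr -scalemxAr mxE [X in X + _]mxE. Qed.

Lemma bilform_mxD M N a b : bilform (M + N) a b = bilform M a b + bilform N a b.
Proof. by rewrite /bilform mulmxDr mulmxDl mxE. Qed.

Lemma bilform_tr M a b : bilform M^T a b = bilform M b a.
Proof. by rewrite /bilform -mulmxA -trmx_mul -[a in LHS]trmxK -trmx_mul mxE. Qed.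

End Bilform.

Lemma derive_quadratic_increment (R : realType) (V W : normedModType R)
    (f : V -> W) (a v : V) (c k : W) :
  (forall h : R, f (h *: v + a) - f a = h *: c + h ^+ 2 *: k) ->
  derivable f a v /\ 'D_v f a = c.
Proof.
move=> incr.
have quotientE : {near 0^', (fun h : R => c + h *: k) =1
    (fun h => h^-1 *: ((f \o shift a) (h *: v) - f a))}.
  near=> h; have h0 : h != 0 by near: h; exact: nbhs_dnbhs_neq.
  rewrite /= incr scalerDr !scalerA mulVf // scale1r.
  by rewrite expr2 mulrA mulVf // mul1r.
have lim_c : (fun h : R => h^-1 *: ((f \o shift a) (h *: v) - f a)) @ 0^' --> c.
  apply: cvg_trans (near_eq_cvg quotientE) _.
  have : (fun h : R => c + h *: k) @ 0 --> c + 0 *: k.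
    by apply: cvgD; [exact: cvg_cst | apply: cvgZ; [exact: cvg_id | exact: cvg_cst]].
  rewrite scale0r addr0; exact: cvg_trans (cvg_app _ (cvg_within _)).
by split; [apply/cvg_ex; exists c | exact: cvg_lim].
Unshelve. all: by end_near.
Qed.

Section QuadraticForms.
Variables (R : realType) (n : nat).
Implicit Types (M N : 'M[R]_n) (v y : 'rV[R]_n).

Lemma qformE M v : qform M v = bilform M v v.
Proof. by []. Qed.

Lemma qformD M N v : qform (M + N) v = qform M v + qform N v.
Proof. exact: bilform_mxD. Qed.

Lemma qform_tr M v : qform M^T v = qform M v.
Proof. exact: bilform_tr. Qed.

Lemma qformZ M (h : R) v : qform M (h *: v) = h ^+ 2 * qform M v.
Proof.
by rewrite /qform linearZ /= -scalemxAr -!scalemxAl scalerA mxE expr2.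
Qed.

Lemma qform_increment M (h : R) v y :
  qform M (h *: v + y) - qform M y =
  h * (bilform M v y + bilform M y v) + h ^+ 2 * qform M v.
Proof. rewrite !qformE bilformPl !bilformPr; ring. Qed.

Lemma unitvE i : unitv R i = delta_mx 0 i :> 'rV[R]_n.
Proof. by apply/rowP => k; rewrite !mxE eqxx eq_sym. Qed.

Lemma bilform_unitv M i j : bilform M (unitv R i) (unitv R j) = M i j.
Proof. by rewrite /bilform !unitvE trmx_delta -rowE -colE !mxE. Qed.

End QuadraticForms.

Section Hessian.
Variables (R : realType) (n : nat).
Implicit Types (M : 'M[R]_n) (v y : 'rV[R]_n).

Lemma derive_qform M v y :
  derivable (qform M) y v /\ 'D_v (qform M) y = bilform M v y + bilform M y v.
Proof. by apply: derive_quadratic_increment => h; rewrite qform_increment. Qed.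

Lemma partial_qform M i :
  partial (qform M) i =
  fun y => bilform M (unitv R i) y + bilform M y (unitv R i).
Proof. by apply: funext => y; exact: (derive_qform M (unitv R i) y).2. Qed.

Lemma partial2_qform M i j y :
  derivable (partial (qform M) i) y (unitv R j) /\
  partial (partial (qform M) i) j y = M i j + M j i.
Proof.
rewrite /partial [derive (qform M) ^~ _]partial_qform -!bilform_unitv.
apply: (@derive_quadratic_increment _ _ _ _ y _ _ 0) => h.
by rewrite bilformPl bilformPr scaler0 addr0 [_ *: _]/GRing.scale /=; ring.
Qed.

Lemma hessian_qformD M (Phi : 'rV[R]_n -> R) (X : set 'rV[R]_n) x :
  open X -> X x ->
  (forall i y, X y -> derivable Phi y (unitv R i)) ->
  (forall i j, derivable (partial Phi i) x (unitv R j)) ->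
  hessian (fun y => qform M y + Phi y) x = M + M^T + hessian Phi x.
Proof.
move=> oX Xx dPhi d2Phi; apply/matrixP => i j; rewrite !mxE.
have partialD : \forall y \near x,
    partial (fun y => qform M y + Phi y) i y =
    (partial (qform M) i + partial Phi i) y.
  have: \forall y \near x, X y by exact: open_nbhs_nbhs.
  apply: filterS => y Xy.
  exact: deriveD (derive_qform M _ y).1 (dPhi i y Xy).
have [d2q q2E] := partial2_qform M i j x.
rewrite /partial (near_eq_derive _ partialD) (deriveD d2q (d2Phi i j)).
by rewrite -[Q in Q + _ = _]/(partial (partial (qform M) i) j x) q2E.
Qed.

End Hessian.

Section EuclideanNorm.
Variables (R : realType) (n : nat).
Implicit Types (M : 'M[R]_n) (a b d v : 'rV[R]_n).

Lemma sumsqr_ge0 a : 0 <= \sum_i a 0 i ^+ 2.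
Proof. by apply: sumr_ge0 => i _; exact: sqr_ge0. Qed.

Lemma sumsqr_gt0 a : a != 0 -> 0 < \sum_i a 0 i ^+ 2.
Proof.
move=> a0; rewrite lt_def sumsqr_ge0 andbT; apply: contra a0 => /eqP sum0.
apply/eqP/rowP => i; rewrite mxE; apply/eqP; rewrite -sqrf_eq0; apply/eqP.
by move/psumr_eq0P: sum0 => -> // j _; exact: sqr_ge0.
Qed.

Lemma euclid_normE a : euclid_norm a ^+ 2 = \sum_i a 0 i ^+ 2.
Proof. by rewrite sqr_sqrtr // sumsqr_ge0. Qed.

Lemma euclid_normZ (c : R) a : euclid_norm (c *: a) = `|c| * euclid_norm a.
Proof.
rewrite /euclid_norm (eq_bigr (fun i => c ^+ 2 * a 0 i ^+ 2)) => [|i _].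
  by rewrite -mulr_sumr sqrtrM ?sqr_ge0 // sqrtr_sqr.
by rewrite mxE exprMn.
Qed.

Lemma sqr_dot_le_sumsqr a b : \sum_i b 0 i ^+ 2 = 1 ->
  (\sum_i a 0 i * b 0 i) ^+ 2 <= \sum_i a 0 i ^+ 2.
Proof.
move=> b1.
have expand p : \sum_i (a 0 i - p * b 0 i) ^+ 2 =
    \sum_i a 0 i ^+ 2 - 2 * p * \sum_i a 0 i * b 0 i + p ^+ 2 * \sum_i b 0 i ^+ 2.
  by rewrite !mulr_sumr -sumrB -big_split /=; apply: eq_bigr => i _; ring.
have := sumsqr_ge0 (\row_i (a 0 i - (\sum_j a 0 j * b 0 j) * b 0 i)).
under eq_bigr do rewrite mxE.
rewrite expand b1; lra.
Qed.

Lemma dot_le_euclid_norm a b : \sum_i b 0 i ^+ 2 = 1 ->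
  \sum_i a 0 i * b 0 i <= euclid_norm a.
Proof.
move=> b1; apply: le_trans (ler_norm _) _.
by rewrite -sqrtr_sqr; apply: ler_wsqrtr; exact: sqr_dot_le_sumsqr.
Qed.

Lemma has_ubound_spectral M :
  has_ubound [set euclid_norm (v *m M^T) | v in [set v | euclid_norm v = 1]].
Proof.
exists (Num.sqrt (\sum_j \sum_k M j k ^+ 2)) => _ [v /= v1 <-].
have v1' : \sum_k v 0 k ^+ 2 = 1 by rewrite -euclid_normE v1 expr1n.
apply: ler_wsqrtr; apply: ler_sum => j _.
have -> : (v *m M^T) 0 j = \sum_k (\row_k M j k) 0 k * v 0 k.
  by rewrite mxE; apply: eq_bigr => k _; rewrite !mxE mulrC.
apply: le_trans (sqr_dot_le_sumsqr _ v1') _.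
by rewrite le_eqVlt (eq_bigr (fun k => M j k ^+ 2)) ?eqxx // => k _; rewrite mxE.
Qed.

Lemma euclid_norm_le_spectral M v :
  euclid_norm v = 1 -> euclid_norm (v *m M^T) <= spectral_norm M.
Proof. by move=> v1; apply: (ub_le_sup (has_ubound_spectral M)); exists v. Qed.

Lemma qform_le_spectral_norm M d :
  qform M d <= spectral_norm M * \sum_i d 0 i ^+ 2.
Proof.
have [->|d0] := eqVneq d 0.
  by rewrite /qform !mul0mx mxE big1 ?mulr0 // => i _; rewrite mxE expr0n.
set s := euclid_norm d; set v := s^-1 *: d.
have s_gt0 : 0 < s by rewrite sqrtr_gt0 sumsqr_gt0.
have s_ge0 := ltW s_gt0.
have v1 : euclid_norm v = 1.
  by rewrite euclid_normZ ger0_norm ?invr_ge0 // mulVf ?gt_eqF.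
have v1' : \sum_i v 0 i ^+ 2 = 1 by rewrite -euclid_normE v1 expr1n.
have -> : d = s *: v by rewrite scalerA mulfV ?scale1r ?gt_eqF.
rewrite qformZ -euclid_normE euclid_normZ (ger0_norm s_ge0) v1 mulr1 mulrC.
rewrite ler_pM2r ?exprn_gt0 // -qform_tr qformE bilform_rowE.
exact: le_trans (dot_le_euclid_norm _ v1') (euclid_norm_le_spectral M v1).
Qed.

End EuclideanNorm.

Lemma affine_nonneg_root (R : realFieldType) (a b t0 eps : R) :
  (forall t, 0 < t < eps -> 0 <= a + t * b) -> 0 < t0 < eps ->
  a + t0 * b = 0 -> b = 0.
Proof.
move=> nonneg /andP[t0_gt0 t0_lt] root.
have above : 0 <= a + (t0 + eps) / 2 * b by apply: nonneg; apply/andP; split; lra.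
have below : 0 <= a + t0 / 2 * b by apply: nonneg; apply/andP; split; lra.
by apply/eqP; rewrite eq_le; apply/andP; split; nra.
Qed.

Section CliqueFaces.
Variables (R : realType) (n : nat) (e : rel 'I_n).
Implicit Types (x y d : 'rV[R]_n).

Lemma is_clique_sub (C D : {set 'I_n}) :
  {subset C <= D} -> is_clique e D -> is_clique e C.
Proof. by move=> CD clD i j /CD Di /CD Dj; exact: clD. Qed.

Lemma qform_adjmx_clique y : (forall i, ~~ e i i) -> is_clique e (supp y) ->
  qform (adjmx R e) y = (\sum_i y 0 i) ^+ 2 - \sum_i y 0 i ^+ 2.
Proof.
move=> eirr cl; rewrite qformE bilformE.
have row_sum i : \sum_j y 0 i * adjmx R e i j * y 0 j =
                 y 0 i * \sum_j y 0 j - y 0 i ^+ 2.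
  have [->|yi0] := eqVneq (y 0 i) 0.
    by rewrite big1 => [|j _]; rewrite ?mul0r ?expr0n /=; ring.
  rewrite mulr_sumr (bigD1 i) //= [X in _ = X - _](bigD1 i) //=.
  rewrite !mxE (negbTE (eirr i)) /= mulr0 mul0r add0r expr2 addrC addrK.
  apply: eq_bigr => j ji; rewrite mxE.
  have [->|yj0] := eqVneq (y 0 j) 0; first by rewrite !mulr0.
  have eij : e i j by apply: cl; rewrite ?inE // eq_sym.
  by rewrite eij mulr1.
by rewrite (eq_bigr _ (fun i _ => row_sum i)) sumrB -mulr_suml expr2.
Qed.

Lemma perm_orbit_sumsqr x xt :
  perm_orbit x xt -> \sum_i xt 0 i ^+ 2 = \sum_i x 0 i ^+ 2.
Proof.
move=> [_ [s xtE]]; rewrite [RHS](reindex_inj (@perm_inj _ s)).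
by apply: eq_bigr => i _; rewrite xtE.
Qed.

Definition feasible_dir x d :=
  exists eps : R, 0 < eps /\ forall t, 0 < t < eps -> simplex0 e (x + t *: d).

Lemma feasible_dir_sum0 x d : simplex x -> feasible_dir x d -> \sum_i d 0 i = 0.
Proof.
move=> [_ sum_x] [eps [eps_gt0 feas]].
have half : 0 < eps / 2 < eps by apply/andP; split; lra.
have [[_ sum_y] _] := feas _ half.
move: sum_y; under eq_bigr do rewrite !mxE.
rewrite big_split /= -mulr_sumr sum_x => sum_y.
have t_gt0 : 0 < eps / 2 by case/andP: half.
by apply: (mulfI (lt0r_neq0 t_gt0)); rewrite mulr0; lra.
Qed.

Lemma feasible_dir_clique x d : feasible_dir x d -> is_clique e (supp d).
Proof.
move=> [eps [eps_gt0 feas]].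
have half : 0 < eps / 2 < eps by apply/andP; split; lra.
have [_ cl_y] := feas _ half.
apply: is_clique_sub cl_y => i; rewrite !inE => di; apply: contra_neq di.
rewrite !mxE => root; apply: (affine_nonneg_root _ half root).
by move=> t /feas [[/(_ i)/andP[+ _] _] _]; rewrite !mxE.
Qed.

End CliqueFaces.

Theorem lemma1 (R : realType) (n : nat) (e : rel 'I_n)
  (X : set 'rV[R]_n) (Phi : 'rV[R]_n -> R) :
  simple_graph e ->
  @simplex R n `<=` X ->
  C2_on X Phi ->
  (forall x, @simplex R n x -> psd (hessian Phi x)) ->
  (forall x, @simplex R n x -> spectral_norm (hessian Phi x) < 2) ->
  (forall x xt, @simplex R n x -> perm_orbit x xt -> Phi xt = Phi x) ->
  let f := fun x : 'rV[R]_n => qform (@adjmx R n e) x + Phi x in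
  forall x, simplex0 e x ->
    (forall xt, perm_orbit x xt -> simplex0 e xt -> f xt = f x) /\
    (forall d : 'rV[R]_n, d != 0 ->
       (exists eps : R, 0 < eps /\
          forall t : R, 0 < t < eps -> simplex0 e (x + t *: d)) ->
       qform (hessian f x) d < 0).
Proof.
move=> [_ eirr] sX [oX [_ [dPhi [_ [d2Phi _]]]]] _ specH permPhi f x [sx clx].
split=> [xt xt_orb [sxt clxt] | d d0 feas].
  rewrite /f (permPhi x xt sx xt_orb) !qform_adjmx_clique //.
  by rewrite (proj2 sx) (proj2 sxt) (perm_orbit_sumsqr xt_orb).
have Xx := sX x sx.
rewrite /f (hessian_qformD _ oX Xx dPhi (fun i j => d2Phi i j x Xx)).
have sum_d0 := feasible_dir_sum0 sx feas.
have clique_d := feasible_dir_clique feas.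
rewrite !qformD qform_tr (qform_adjmx_clique eirr clique_d) sum_d0 expr0n sub0r.
have := qform_le_spectral_norm (hessian Phi x) d.
have := specH x sx; have := sumsqr_gt0 d0; nra.
Qed.
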